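(* In any execution of $\mathcal{U}$, let $p$ be a process and suppose $H_p = (t, r)$ at time $T$ with $r \neq NULL$. Then for all times $T' \geq T$, if $H_p.time = t$ at $T'$ then $H_p.response = r$ at $T'$.
   Context: Model: an asynchronous shared-memory system with possibly infinitely many processes, any of which may crash, communicating via atomic shared objects. A fetch-and-increment (F\&I) object stores an integer; F\&I$(C)$ atomically returns the current value and increments it. A generalized-compare-and-swap (GCAS) object $O$ stores a value and supports Read$(O)$ and GCAS$(c, O, v_1, v_2)$, which atomically does: if $c(\text{current value of } O, v_1)$ holds then set $O := v_2$ and return true, else return false. Tuples are compared componentwise for $=$; GCAS$(>, A, (t,-,-), v)$ succeeds iff the time field of $A$ is strictly greater than $t$. Implemented type $\mathcal{T} = (OP, RES, Q, \delta)$ with initial state $s_0$; a procedure $apply_{\mathcal{T}}(o,s)$ returns some $(s',r)$ with $(s,o,s',r)\in\delta$. $NULL$ is a value different from every response of $\mathcal{T}$, and $NOOP$ is a name different from every operation of $\mathcal{T}$. Algorithm $\mathcal{U}$: each process $p$ owns a GCAS object $H_p$ with fields $(time, response)$. Shared objects: F\&I object $C$, initially $1$; GCAS object $A$ with fields $(time, op, ptr)$, initially $(0, NOOP, h(NOOP))$, where $h(NOOP)$ is a pointer to an immutable location containing $(0,\perp)$; GCAS object $S$ with fields $(time, state, response, ptr)$, initially $(0, s_0, \perp, h(NOOP))$. Process $p$ performs operation $o$ by calling DoOp$(o)$: (1) DoOp$(o)$ invoked; (2) $t := $ F\&I$(C)$; (3) $H_p := (t, NULL)$; (4) while $H_p =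 (t, NULL)$ do: (5) $(t^*, s^*, r^*, roptr^* ) := S$; (6) GCAS$(=, *roptr^*, (t^*, NULL), (t^*, r^* ))$; (7) GCAS$(>, A, (t,-,-), (t, o, \&H_p))$; (8) $(t', o', roptr') := A$; (9) $(\hat t, \hat r) := *roptr'$; (10) if $(\hat t,\hat r) = (t', NULL)$ then (11) $(s', r') := apply_{\mathcal{T}}(o', s^* )$; (12) GCAS$(=, S, (t^*,s^*,r^*,roptr^* ), (t', s', r', roptr'))$; (13) else GCAS$(=, A, (t', o', roptr'), (t, o, \&H_p))$; end while; (14) return $H_p.response$. *)

From Stdlib Require Import Arith ClassicalEpsilon.

(* Values of a response field: NULL, the initial bottom value, or a response
   of the implemented type T. *)
Inductive Resp (RES : Type) : Type :=
| RNull : Resp RES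
| RBot  : Resp RES
| RVal  : RES -> Resp RES.
Arguments RNull {RES}.
Arguments RBot {RES}.
Arguments RVal {RES} _.

(* Pointers: h(NOOP) (immutable location containing (0,bot)) or &H_q. *)
Inductive Ptr (P : Type) : Type :=
| PNoop : Ptr P
| PH    : P -> Ptr P.
Arguments PNoop {P}.
Arguments PH {P} _.

Definition upd {P X : Type} (f : P -> X) (p : P) (x : X) : P -> X :=
  fun q => if excluded_middle_informative (q = p) then x else f q.

Section AlgorithmU.
Variables (P OP RES Q : Type).
(* transition relation delta of T: delta s o s' r  <->  (s,o,s',r) \in delta *)
Variable delta : Q -> OP -> Q -> RES -> Prop.
Variable s0 : Q.

(* The op field of A: None encodes NOOP, Some o the operation o. *)
Definition Afield := (nat * option OP * Ptr P)%type.
Definition Sfield := (nat * Q * Resp RES * Ptr P)%type.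
Definition Hfield := (nat * Resp RES)%type.

(* Local state of a process: program counter (the line it will execute
   next) together with its live local variables. *)
Inductive Loc : Type :=
| Idle
| At2  (o : OP)
| At3  (o : OP) (t : nat)
| At4  (o : OP) (t : nat)
| At5  (o : OP) (t : nat)
| At6  (o : OP) (t ts : nat) (ss : Q) (rs : Resp RES) (ps : Ptr P)
| At7  (o : OP) (t ts : nat) (ss : Q) (rs : Resp RES) (ps : Ptr P)
| At8  (o : OP) (t ts : nat) (ss : Q) (rs : Resp RES) (ps : Ptr P)
| At9  (o : OP) (t ts : nat) (ss : Q) (rs : Resp RES) (ps : Ptr P)
         (t' : nat) (o' : option OP) (p' : Ptr P)
| At10 (o : OP) (t ts : nat) (ss : Q) (rs : Resp RES) (ps : Ptr P)
         (t' : nat) (o' : option OP) (p' : Ptr P) (th : nat) (rh : Resp RES)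
| At11 (o : OP) (t ts : nat) (ss : Q) (rs : Resp RES) (ps : Ptr P)
         (t' : nat) (o' : option OP) (p' : Ptr P)
| At12 (o : OP) (t ts : nat) (ss : Q) (rs : Resp RES) (ps : Ptr P)
         (t' : nat) (o' : option OP) (p' : Ptr P) (s' : Q) (r' : RES)
| At13 (o : OP) (t t' : nat) (o' : option OP) (p' : Ptr P)
| At14 (o : OP) (t : nat).

Record Config : Type := mkC {
  cC : nat;
  cA : Afield;
  cS : Sfield;
  cH : P -> Hfield;
  cL : P -> Loc }.

Definition init : Config :=
  mkC 1 (0, None, PNoop) (0, s0, RBot, PNoop) (fun _ => (0, RBot)) (fun _ => Idle).

Definition deref (H : P -> Hfield) (x : Ptr P) : Hfield :=
  match x with PNoop => (0, RBot) | PH q => H q end.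

(* One atomic step of process p (one line of the pseudocode). *)
Inductive step (p : P) : Config -> Config -> Prop :=
| st1 : forall C A S H L o, L p = Idle ->
    step p (mkC C A S H L) (mkC C A S H (upd L p (At2 o)))
| st2 : forall C A S H L o, L p = At2 o ->
    step p (mkC C A S H L) (mkC (Datatypes.S C) A S H (upd L p (At3 o C)))
| st3 : forall C A S H L o t, L p = At3 o t ->
    step p (mkC C A S H L) (mkC C A S (upd H p (t, RNull)) (upd L p (At4 o t)))
| st4_loop : forall C A S H L o t, L p = At4 o t -> H p = (t, RNull) ->
    step p (mkC C A S H L) (mkC C A S H (upd L p (At5 o t)))
| st4_exit : forall C A S H L o t, L p = At4 o t -> H p <> (t, RNull) ->
    step p (mkC C A S H L) (mkC C A S H (upd L p (At14 o t)))
| st5 : forall C A S H L o t ts ss rs ps, L p = At5 o t -> S = (ts, ss, rs, ps) ->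
    step p (mkC C A S H L) (mkC C A S H (upd L p (At6 o t ts ss rs ps)))
| st6_succ : forall C A S H L o t ts ss rs ps q, L p = At6 o t ts ss rs ps ->
    ps = PH q -> H q = (ts, RNull) ->
    step p (mkC C A S H L)
           (mkC C A S (upd H q (ts, rs)) (upd L p (At7 o t ts ss rs ps)))
| st6_fail : forall C A S H L o t ts ss rs ps, L p = At6 o t ts ss rs ps ->
    deref H ps <> (ts, RNull) ->
    step p (mkC C A S H L) (mkC C A S H (upd L p (At7 o t ts ss rs ps)))
| st7_succ : forall C A S H L o t ts ss rs ps, L p = At7 o t ts ss rs ps ->
    fst (fst A) > t ->
    step p (mkC C A S H L)
           (mkC C (t, Some o, PH p) S H (upd L p (At8 o t ts ss rs ps)))
| st7_fail : forall C A S H L o t ts ss rs ps, L p = At7 o t ts ss rs ps ->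
    ~ (fst (fst A) > t) ->
    step p (mkC C A S H L) (mkC C A S H (upd L p (At8 o t ts ss rs ps)))
| st8 : forall C A S H L o t ts ss rs ps t' o' p', L p = At8 o t ts ss rs ps ->
    A = (t', o', p') ->
    step p (mkC C A S H L)
           (mkC C A S H (upd L p (At9 o t ts ss rs ps t' o' p')))
| st9 : forall C A S H L o t ts ss rs ps t' o' p' th rh,
    L p = At9 o t ts ss rs ps t' o' p' -> deref H p' = (th, rh) ->
    step p (mkC C A S H L)
           (mkC C A S H (upd L p (At10 o t ts ss rs ps t' o' p' th rh)))
| st10_then : forall C A S H L o t ts ss rs ps t' o' p' th rh,
    L p = At10 o t ts ss rs ps t' o' p' th rh -> (th, rh) = (t', RNull) ->
    step p (mkC C A S H L)
           (mkC C A S H (upd L p (At11 o t ts ss rs ps t' o' p')))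
| st10_else : forall C A S H L o t ts ss rs ps t' o' p' th rh,
    L p = At10 o t ts ss rs ps t' o' p' th rh -> (th, rh) <> (t', RNull) ->
    step p (mkC C A S H L) (mkC C A S H (upd L p (At13 o t t' o' p')))
| st11 : forall C A S H L o t ts ss rs ps t' o1 p' s' r',
    L p = At11 o t ts ss rs ps t' (Some o1) p' -> delta ss o1 s' r' ->
    step p (mkC C A S H L)
           (mkC C A S H (upd L p (At12 o t ts ss rs ps t' (Some o1) p' s' r')))
| st12_succ : forall C A S H L o t ts ss rs ps t' o' p' s' r',
    L p = At12 o t ts ss rs ps t' o' p' s' r' -> S = (ts, ss, rs, ps) ->
    step p (mkC C A S H L) (mkC C A (t', s', RVal r', p') H (upd L p (At4 o t)))
| st12_fail : forall C A S H L o t ts ss rs ps t' o' p' s' r',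
    L p = At12 o t ts ss rs ps t' o' p' s' r' -> S <> (ts, ss, rs, ps) ->
    step p (mkC C A S H L) (mkC C A S H (upd L p (At4 o t)))
| st13_succ : forall C A S H L o t t' o' p', L p = At13 o t t' o' p' ->
    A = (t', o', p') ->
    step p (mkC C A S H L) (mkC C (t, Some o, PH p) S H (upd L p (At4 o t)))
| st13_fail : forall C A S H L o t t' o' p', L p = At13 o t t' o' p' ->
    A <> (t', o', p') ->
    step p (mkC C A S H L) (mkC C A S H (upd L p (At4 o t)))
| st14 : forall C A S H L o t, L p = At14 o t ->
    step p (mkC C A S H L) (mkC C A S H (upd L p Idle)).

(* An execution: configuration at each time n; each transition is a step of
   some process (or nothing happens).  Crashed processes simply take no
   further steps; the scheduling is arbitrary. *)
Definition is_execution (e : nat -> Config) : Prop :=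
  e 0 = init /\
  forall n, e (Datatypes.S n) = e n \/ exists p, step p (e n) (e (Datatypes.S n)).

End AlgorithmU.

(* H_p is written only at line 3, by p itself, and at line 6, by any process.
   Line 3 stores a fresh value of the counter C, and C exceeds every time
   stamp already present in the H's, so the time field of H_p strictly
   increases there.  Line 6 keeps the time field and only fires when the
   response field is NULL.  Hence, once H_p = (t, r) with r <> NULL, either
   H_p's time has moved past t or H_p is still (t, r). *)
From Stdlib Require Import Lia ClassicalEpsilon.

Lemma upd_eq {X Y : Type} (f : X -> Y) (p : X) (y : Y) : upd f p y p = y.
Proof. unfold upd; destruct excluded_middle_informative; congruence. Qed.

Lemma upd_neq {X Y : Type} (f : X -> Y) (p : X) (y : Y) (q : X) :
  q <> p -> upd f p y q = f q.
Proof. unfold upd; destruct excluded_middle_informative; congruence. Qed.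

Lemma upd_cases {X Y : Type} (f : X -> Y) (p : X) (y : Y) (q : X) :
  (q = p /\ upd f p y q = y) \/ (q <> p /\ upd f p y q = f q).
Proof.
  destruct (excluded_middle_informative (q = p)) as [-> | Hqp].
  - left; split; [reflexivity | apply upd_eq].
  - right; split; [exact Hqp | apply upd_neq, Hqp].
Qed.

Section AlgorithmUExecutions.
Variables (P OP RES Q : Type) (delta : Q -> OP -> Q -> RES -> Prop) (s0 : Q).

Local Notation config := (Config P OP RES Q).
Local Notation step := (step P OP RES Q delta).
Local Notation at3 := (At3 P OP RES Q).
Arguments cC {P OP RES Q}.
Arguments cH {P OP RES Q}.
Arguments cL {P OP RES Q}.

Lemma execution_invariant (I : config -> Prop) (e : nat -> config) :
  is_execution P OP RES Q delta s0 e ->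
  I (init P OP RES Q s0) ->
  (forall p c c', step p c c' -> I c -> I c') ->
  forall n, I (e n).
Proof.
  intros [He0 Hstep] Hinit Hpres n; induction n as [| n IH].
  - rewrite He0; exact Hinit.
  - destruct (Hstep n) as [-> | [p Hs]]; [exact IH | exact (Hpres _ _ _ Hs IH)].
Qed.

Lemma execution_stable_from (I J : config -> Prop) (e : nat -> config) (T : nat) :
  is_execution P OP RES Q delta s0 e ->
  (forall n, I (e n)) ->
  (forall p c c', I c -> step p c c' -> J c -> J c') ->
  J (e T) -> forall T', T <= T' -> J (e T').
Proof.
  intros [_ Hstep] HI Hpres HT T' HTT'; induction HTT' as [| n _ IH]; [exact HT |].
  destruct (Hstep n) as [-> | [p Hs]]; [exact IH | exact (Hpres _ _ _ (HI n) Hs IH)].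
Qed.

(* The second clause is what makes line 3 write a time stamp larger than the
   one it overwrites: the value t it stores was fetched from C at line 2. *)
Definition time_bounds (c : config) : Prop :=
  (forall q, fst (cH c q) < cC c) /\
  (forall q o t, cL c q = at3 o t -> fst (cH c q) < t < cC c).

Lemma time_bounds_init : time_bounds (init P OP RES Q s0).
Proof. split; simpl; [intros; lia | discriminate]. Qed.

Lemma at3_upd (L : P -> Loc P OP RES Q) (p q : P) (x : Loc P OP RES Q) o t :
  (forall o' t', x <> at3 o' t') -> upd L p x q = at3 o t -> q <> p /\ L q = at3 o t.
Proof.
  intros Hx Hq; destruct (upd_cases L p x q) as [[_ E] | [Hqp E]]; rewrite E in Hq;
    [exfalso; exact (Hx _ _ Hq) | split; assumption].
Qed.

Lemma time_bounds_step p c c' : step p c c' -> time_bounds c -> time_bounds c'.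
Proof.
  intros Hs [HC Hat3]; destruct Hs; unfold time_bounds in *; simpl in *;
    try (split; [exact HC | intros x ox tx Hx; apply Hat3 with ox;
                            apply at3_upd in Hx as [_ Hx]; [exact Hx | discriminate]]).
  - (* line 2: C is incremented and p now holds its old value *)
    split; [intros q; specialize (HC q); lia |].
    intros q o' t' Hq; destruct (upd_cases L p (At3 P OP RES Q o C) q)
      as [[-> E] | [_ E]]; rewrite E in Hq.
    + injection Hq as <- <-; split; [apply HC | lia].
    + destruct (Hat3 _ _ _ Hq); lia.
  -
    assert (Ht : fst (H p) < t < C) by (apply Hat3 with o; assumption).
    split.
    + intros q; destruct (upd_cases H p (t, RNull) q) as [[_ E] | [_ E]];
        rewrite E; simpl; [lia | apply HC].
    + intros q o' t' Hq; apply at3_upd in Hq as [Hqp Hq]; [| discriminate].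
      rewrite upd_neq by exact Hqp; apply Hat3 with o'; exact Hq.
  - (* line 6: the time field of H_q is unchanged *)
    assert (Htime : forall x, fst (upd H q (ts, rs) x) = fst (H x)).
    { intros x; destruct (upd_cases H q (ts, rs) x) as [[-> E] | [_ E]];
        rewrite E; [match goal with Hq : H q = _ |- _ => rewrite Hq end |];
        reflexivity. }
    split; [intros x; rewrite Htime; apply HC |].
    intros x o' t' Hx; rewrite Htime; apply Hat3 with o'.
    apply at3_upd in Hx as [_ Hx]; [exact Hx | discriminate].
Qed.

Definition response_settled (p : P) (t : nat) (r : Resp RES) (c : config) : Prop :=
  t <= fst (cH c p) /\ (fst (cH c p) = t -> snd (cH c p) = r).

Lemma response_settled_step p t r z c c' :
  r <> RNull -> time_bounds c -> step z c c' ->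
  response_settled p t r c -> response_settled p t r c'.
Proof.
  intros Hr [_ Hat3] Hs [Hge Heq]; destruct Hs; unfold response_settled in *;
    simpl in *; try (split; assumption).
  - (* line 3 by z: the new time stamp exceeds the old one *)
    destruct (upd_cases H z (t0, RNull) p) as [[-> E] | [_ E]]; rewrite E; simpl.
    + assert (fst (H z) < t0 < C) by (apply Hat3 with o; assumption).
      split; intros; lia.
    + split; assumption.
  - (* line 6 on H_q: it fires only on a NULL response, so not on (t, r) *)
    destruct (upd_cases H q (ts, rs) p) as [[-> E] | [_ E]]; rewrite E; simpl.
    + match goal with Hq : H q = _ |- _ => rewrite Hq in Hge, Heq end; simpl in *.
      assert (ts <> t) by (intros <-; exact (Hr (eq_sym (Heq eq_refl)))).
      split; [lia | intros <-; contradiction].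
    + split; assumption.
Qed.

End AlgorithmUExecutions.

Theorem mainTheorem3 (P OP RES Q : Type) (delta : Q -> OP -> Q -> RES -> Prop)
  (s0 : Q) (e : nat -> Config P OP RES Q) :
  @is_execution P OP RES Q delta s0 e ->
  forall (p : P) (T : nat) (t : nat) (r : Resp RES),
    @cH P OP RES Q (e T) p = (t, r) -> r <> @RNull RES ->
    forall T' : nat, T <= T' ->
      fst (@cH P OP RES Q (e T') p) = t -> snd (@cH P OP RES Q (e T') p) = r.
Proof.
  intros Hexec p T t r HT Hr T' HTT'.
  assert (Hbounds : forall n, time_bounds P OP RES Q (e n))
    by (apply (execution_invariant _ _ _ _ delta s0);
        [exact Hexec | apply time_bounds_init | apply time_bounds_step]).
  assert (HT0 : response_settled P OP RES Q p t r (e T))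
    by (unfold response_settled; rewrite HT; split; [apply le_n | intros _; reflexivity]).
  refine (proj2 (execution_stable_from _ _ _ _ delta s0 _
            (response_settled P OP RES Q p t r) e T Hexec Hbounds _ HT0 T' HTT')).
  intros z c c'; apply response_settled_step; exact Hr.
Qed.
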